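(* Let ${\rm H}>0$, ${\rm K}>0$ and set \[ R^{({\rm H},{\rm K})}(s,t)=2^{-{\rm K}}\Bigl(\bigl(|s|^{2{\rm H}}+|t|^{2{\rm H}}\bigr)^{{\rm K}}-|t-s|^{2{\rm H}{\rm K}}\Bigr). \] (a) If there exists a centered Gaussian process $(B(t))_{t\in\mathbb{R}}$ with covariance $R^{({\rm H},{\rm K})}(s,t)$, $s,t\in\mathbb{R}$, then $(2{\rm H}-1){\rm K}\le 1$, i.e. ${\rm K}\le \frac{1}{2{\rm H}-1}$ whenever ${\rm H}>\tfrac12$. (b) If there exists a centered Gaussian process $(B(t))_{t\ge 0}$ with covariance $R^{({\rm H},{\rm K})}(s,t)$, $s,t\ge 0$, then ${\rm K}\le \widehat{{\rm K}}({\rm H})$, where \[ \widehat{{\rm K}}({\rm H}):=\sup\Bigl\{{\rm K}'>0:\ \sup_{\tau>0}\Bigl(\bigl(\cosh({\rm H}\tau)\bigr)^{{\rm K}'}-2^{(2{\rm H}-1){\rm K}'}\bigl|\sinh(\tau/2)\bigr|^{2{\rm H}{\rm K}'}\Bigr)\le 1\Bigr\}. \] Moreover, $\widehat{{\rm K}}({\rm H})<{\rm H}^{-1}$ for every ${\rm H}>1$. *)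

From HB Require Import structures.
From mathcomp Require Import all_boot all_order all_algebra.
From mathcomp Require Import all_classical all_reals all_analysis.
Set Implicit Arguments. Unset Strict Implicit. Unset Printing Implicit Defensive.
Import Order.TTheory GRing.Theory Num.Theory.
Import numFieldNormedType.Exports.
Local Open Scope classical_set_scope.
Local Open Scope ring_scope.

Definition cosh {R : realType} (x : R) : R := (expR x + expR (- x)) / 2.
Definition sinh {R : realType} (x : R) : R := (expR x - expR (- x)) / 2.

Definition covHK {R : realType} (H K : R) (s t : R) : R :=
  2 `^ (- K) * ((`|s| `^ (2 * H) + `|t| `^ (2 * H)) `^ K
                 - `|t - s| `^ (2 * H * K)).

(* A real random variable Y is centered Gaussian: its law is N(0, s^2) for
   some s > 0, or the Dirac mass at 0 (degenerate Gaussian, s = 0). *)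
Definition centered_gaussian_rv {d} {T : measurableType d} {R : realType}
  (P : probability T R) (Y : T -> R) : Prop :=
  exists2 s : R, 0 <= s &
    forall A : set R, measurable A ->
      P (Y @^-1` A) = (if s == 0 then \d_(0 : R) A else normal_prob 0 s A).

Definition centered_gaussian_process {d} {T : measurableType d} {R : realType}
  (P : probability T R) (S : set R) (X : R -> T -> R) (C : R -> R -> R) : Prop :=
  [/\ (forall t, S t -> measurable_fun setT (X t)),
      (forall t, S t -> ('E_P[X t] = 0)%E),
      (forall s t, S s -> S t -> ('E_P[X s \* X t] = (C s t)%:E)%E) &
      (forall (n : nat) (ts : 'I_n -> R) (a : 'I_n -> R),
          (forall i, S (ts i)) ->
          centered_gaussian_rv P (fun w => \sum_(i < n) a i * X (ts i) w))].

Definition Kfun {R : realType} (H K' tau : R) : R :=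
  cosh (H * tau) `^ K' - 2 `^ ((2 * H - 1) * K') * `|sinh (tau / 2)| `^ (2 * H * K').

Definition Khat {R : realType} (H : R) : \bar R :=
  ereal_sup [set K'%:E | K' in
    [set K' : R | (0 < K')%R /\
      (ereal_sup [set (Kfun H K' tau)%:E | tau in [set tau : R | (0 < tau)%R]]
         <= 1%E)%E]].

(* Cauchy-Schwarz for the covariance, |R(s,t)| <= sqrt(R(s,s)) sqrt(R(t,t)),
   is all that is used about the process.  At (s,t) = (1,-1) it reads
   |1 - 2^((2H-1)K)| <= 1, which is (a).  At (s,t) = (1,e^tau) both sides carry
   the factor e^(tau H K) and what remains is Kfun H K tau <= 1, i.e. K belongs
   to the set defining Khat(H), which is (b).
   For (c), cosh(H tau) >= e^(H tau)/2 gives the minorant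
   Kfun H K tau >= (e^(H tau)/2)^K (1 - w^K) with w = (1 - e^(-tau))^(2H).
   When e^(H tau) >= 2 it is nondecreasing in K, and at K = 1/H it equals
   (2 - e^(-tau)) / 2^(1/H), which exceeds 1 for tau large enough when H > 1.
   By continuity in K it already exceeds 1 at some K0 < 1/H, so no K > K0 is
   admissible and Khat(H) <= K0 < 1/H. *)

From HB Require Import structures.
From mathcomp Require Import all_boot all_order all_algebra.
From mathcomp Require Import all_classical all_reals all_analysis.
From mathcomp Require Import lra ring measurable_realfun.
Import Order.TTheory GRing.Theory Num.Theory.
Import numFieldNormedType.Exports.
Set Implicit Arguments. Unset Strict Implicit. Unset Printing Implicit Defensive.
Local Open Scope classical_set_scope.
Local Open Scope ring_scope.

Section powR_exponent.
Variable R : realType.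

Lemma gt0_powRD (x : R) : 0 < x -> forall r s, x `^ (r + s) = x `^ r * x `^ s.
Proof. by move=> x0 r s; rewrite powRD//; apply/implyP => _; rewrite gt_eqF. Qed.

Lemma gt1_ler_powRr (b r s : R) : 1 < b -> (b `^ r <= b `^ s) = (r <= s).
Proof.
move=> b1; have b0 : 0 < b by apply: lt_trans b1.
by rewrite /powR gt_eqF// ler_expR ler_pM2r// ln_gt0.
Qed.

Lemma gt1_ltr_powRr (b r s : R) : 1 < b -> (b `^ r < b `^ s) = (r < s).
Proof. by move=> b1; rewrite !ltNge gt1_ler_powRr. Qed.

Lemma powR_le1 (a r : R) : 0 < a <= 1 -> 0 <= r -> a `^ r <= 1.
Proof. by move=> a01 r_ge0; rewrite -(powRr0 a) (ger_powR a01 r_ge0). Qed.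

Lemma powRV (a r : R) : 0 <= a -> a^-1 `^ r = (a `^ r)^-1.
Proof. by move=> a_ge0; rewrite -powR_inv1// -powRrM mulN1r powRN. Qed.

Lemma continuous_powRr (c : R) : 0 < c -> continuous (fun r : R => c `^ r).
Proof.
move=> c0 a; rewrite /powR gt_eqF//.
apply: continuous_comp; last exact: continuous_expR.
by apply: continuousM; [exact: cvg_id | exact: cvg_cst].
Qed.

End powR_exponent.

Lemma continuous_gt_left (R : realType) (g : R -> R) (x y z : R) :
  {for x, continuous g} -> z < g x -> y < x -> exists2 a, y < a < x & z < g a.
Proof.
move=> gx zg yx.
have : \forall a \near x^'-, (y < a < x) /\ z < g a.
  near=> a; split; last by near: a; apply: cvgr_gt zg; exact: cvg_within_filter.
  apply/andP; split; near: a; [exact: nbhs_left_gt | exact: nbhs_left_lt].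
by move=> /filter_ex[a []]; exists a.
Unshelve. all: by end_near. Qed.

Section hyperbolic.
Variable R : realType.

Lemma cosh_ge_expR_half (x : R) : expR x / 2 <= cosh x.
Proof. by rewrite /cosh ler_pM2r// lerDl expR_ge0. Qed.

Lemma cosh_gt0 (x : R) : 0 < cosh x.
Proof. by rewrite /cosh divr_gt0// addr_gt0// expR_gt0. Qed.

Lemma sinh_half (t : R) : 2 * sinh (t / 2) = expR (t / 2) * (1 - expR (- t)).
Proof.
rewrite /sinh mulrC divfK ?pnatr_eq0// mulrBr mulr1 -expRD.
by congr (_ - expR _); field.
Qed.

Lemma cosh_mul_expR (x : R) : 2 * cosh x * expR x = 1 + expR (2 * x).
Proof.
rewrite /cosh [2 * _]mulrC divfK ?pnatr_eq0// mulrDl -!expRD addNr expR0.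
by rewrite addrC; congr (_ + expR _); ring.
Qed.

Lemma sinh_mul_expR (x : R) : 2 * sinh x * expR x = expR (2 * x) - 1.
Proof.
rewrite /sinh [2 * _]mulrC divfK ?pnatr_eq0// mulrBl -!expRD addNr expR0.
by congr (expR _ - _); ring.
Qed.
End hyperbolic.

Section Kfun_minorant.
Variables (R : realType) (H : R).

Definition Kfun_minorant (K tau : R) : R :=
  (expR (H * tau) / 2) `^ K * (1 - ((1 - expR (- tau)) `^ (2 * H)) `^ K).

Lemma Kfun_ge_minorant (K tau : R) : 0 <= K -> 0 <= tau ->
  Kfun_minorant K tau <= Kfun H K tau.
Proof.
move=> K_ge0 tau_ge0.
have two_gt0 : 0 < 2 :> R := ltr0Sn R 1.
have x_ge0 : 0 <= 1 - expR (- tau) by rewrite subr_ge0 expR_le1 oppr_le0.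
have sinh_term : 2 `^ (2 * H - 1) * `|sinh (tau / 2)| `^ (2 * H) =
    expR (H * tau) / 2 * (1 - expR (- tau)) `^ (2 * H).
  rewrite (gt0_powRD two_gt0) (powR_inv1 (ltW two_gt0)) mulrAC.
  rewrite -(powRM _ (ltW two_gt0) (normr_ge0 _)).
  have -> : 2 * `|sinh (tau / 2)| = expR (tau / 2) * (1 - expR (- tau)).
    rewrite -(ger0_norm (mulr_ge0 (expR_ge0 (tau / 2)) x_ge0)) -sinh_half.
    by rewrite [RHS]normrM normr_nat.
  rewrite (powRM _ (expR_ge0 _) x_ge0) -expRM mulrAC.
  by congr (expR _ / 2 * _); field.
have half_expR_ge0 : 0 <= expR (H * tau) / 2 by rewrite divr_ge0 ?expR_ge0 ?ltW.
rewrite /Kfun_minorant /Kfun (powRrM 2 (2 * H - 1)) (powRrM `|sinh (tau / 2)| (2 * H)).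
rewrite -(powRM _ (powR_ge0 _ _) (powR_ge0 _ _)) sinh_term.
rewrite (powRM _ half_expR_ge0 (powR_ge0 _ _)) mulrBr mulr1 lerD2r.
apply: (ge0_ler_powR K_ge0); rewrite ?nnegrE ?cosh_ge_expR_half//.
exact: ltW (cosh_gt0 _).
Qed.

Lemma Kfun_minorant_homo (tau : R) : 0 <= H -> 0 < tau -> 2 <= expR (H * tau) ->
  {in Num.nneg &, {homo Kfun_minorant ^~ tau : K K' / K <= K'}}.
Proof.
move=> H_ge0 tau_gt0 two_le K K' /[!nnegrE] K_ge0 K'_ge0 KK'.
have x01 : 0 < 1 - expR (- tau) <= 1.
  by rewrite subr_gt0 expR_lt1 oppr_lt0 tau_gt0 lerBlDr lerDl expR_ge0.
have w01 : 0 < (1 - expR (- tau)) `^ (2 * H) <= 1.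
  by rewrite powR_gt0 ?(andP x01).1//= powR_le1// mulr_ge0.
rewrite /Kfun_minorant; apply: ler_pM.
- exact: powR_ge0.
- by rewrite subr_ge0 powR_le1.
- by apply: ler_powR => //; rewrite ler_pdivlMr ?mul1r.
- by rewrite lerD2l lerN2 (ger_powR w01).
Qed.

Lemma continuous_Kfun_minorant (tau : R) : 0 < tau ->
  continuous (Kfun_minorant ^~ tau).
Proof.
move=> tau_gt0 K.
have x_gt0 : 0 < 1 - expR (- tau) by rewrite subr_gt0 expR_lt1 oppr_lt0.
apply: continuousM; first by apply: continuous_powRr; rewrite divr_gt0 ?expR_gt0.
apply: continuousB; first exact: cvg_cst.
by apply: continuous_powRr; rewrite powR_gt0.
Qed.

Lemma Kfun_minorant_invH (tau : R) : H != 0 -> 0 <= tau ->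
  Kfun_minorant H^-1 tau = (2 - expR (- tau)) / 2 `^ H^-1.
Proof.
move=> H_neq0 tau_ge0.
have half_ge0 : 0 <= 2^-1 :> R by rewrite invr_ge0 ler0n.
have x_ge0 : 0 <= 1 - expR (- tau) by rewrite subr_ge0 expR_le1 oppr_le0.
rewrite /Kfun_minorant -(powRrM (1 - expR (- tau))) (mulfK H_neq0).
rewrite (powR_mulrn 2 x_ge0) (powRM _ (expR_ge0 _) half_ge0) -expRM.
rewrite (powRV _ (ler0n R 2)) (mulrC H tau) (mulfK H_neq0).
have -> : 1 - (1 - expR (- tau)) ^+ 2 = expR (- tau) * (2 - expR (- tau)) by ring.
by rewrite mulrAC mulrA expRxMexpNx_1 mul1r.
Qed.
End Kfun_minorant.

Lemma Khat_ge (R : realType) (H K : R) : 0 < K ->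
  (forall tau, 0 < tau -> Kfun H K tau <= 1) -> (K%:E <= Khat H)%E.
Proof.
move=> K_gt0 Kfun_le1; apply: ereal_sup_ubound; exists K => //; split => //.
by apply: ge_ereal_sup => _ [tau tau_gt0 <-]; rewrite lee_fin Kfun_le1.
Qed.

Lemma Khat_le (R : realType) (H K0 : R) :
  (forall K : R, 0 < K -> K0 < K -> exists2 tau, 0 < tau & 1 < Kfun H K tau) ->
  (Khat H <= K0%:E)%E.
Proof.
move=> Kfun_gt1; apply: ge_ereal_sup => _ [K [K_gt0 sup_le1] <-].
rewrite lee_fin leNgt; apply/negP => K0_lt_K.
have [tau tau_gt0 Kfun_tau_gt1] := Kfun_gt1 K K_gt0 K0_lt_K.
have : ((Kfun H K tau)%:E <= 1)%E.
  by apply: le_trans sup_le1; apply: ereal_sup_ubound; exists tau.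
by rewrite lee_fin leNgt Kfun_tau_gt1.
Qed.

Lemma Kfun_minorant_invH_gt1 (R : realType) (H : R) : 1 < H ->
  exists2 tau, 0 < tau /\ 2 <= expR (H * tau) & 1 < Kfun_minorant H H^-1 tau.
Proof.
move=> H_gt1; have H_gt0 : 0 < H := lt_trans ltr01 H_gt1.
pose y := 2 `^ H^-1.
have y_gt1 : 1 < y.
  by rewrite /y -[X in X < _](powRr0 2) (gt1_ltr_powRr _ _ (ltr1n R 2)) invr_gt0.
have y_lt2 : y < 2.
  by rewrite /y -[X in _ < X](powRr1 (ler0n R 2)) (gt1_ltr_powRr _ _ (ltr1n R 2)) invf_lt1.
(* Any e^(-tau) < 2 - y makes the minorant at 1/H exceed 1; halving 2 - y also
   gives e^(-tau) < 1/2, hence e^(H tau) >= e^tau > 2. *)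
pose x := (2 - y) / 2.
have x_gt0 : 0 < x by rewrite /x; lra.
have x_lt1 : x < 1 by rewrite /x; lra.
pose tau := - ln x.
have expNtau : expR (- tau) = x by rewrite opprK lnK// posrE.
have tau_gt0 : 0 < tau by rewrite oppr_gt0 ln_lt0// x_gt0 x_lt1.
exists tau; first split => //.
  apply: (@le_trans _ _ (x^-1)).
    by rewrite -(ler_pM2r x_gt0) mulVf ?gt_eqF// /x; lra.
  by rewrite -expNtau expRN invrK ler_expR ler_peMl// ltW.
rewrite Kfun_minorant_invH ?gt_eqF ?ltW// expNtau.
by rewrite ltr_pdivlMr ?mul1r -/y /x; lra.
Qed.

Lemma Kfun_gt1_large_K (R : realType) (H : R) : 1 < H ->
  exists2 K0, K0 < H^-1 &
    forall K : R, 0 < K -> K0 < K -> exists2 tau, 0 < tau & 1 < Kfun H K tau.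
Proof.
move=> H_gt1; have H_gt0 : 0 < H := lt_trans ltr01 H_gt1.
have [tau [tau_gt0 two_le] minorant_gt1] := Kfun_minorant_invH_gt1 H_gt1.
have invH_gt0 : 0 < H^-1 by rewrite invr_gt0.
have [K0 /andP[K0_gt0 K0_lt_invH] K0_gt1] := continuous_gt_left
  (continuous_Kfun_minorant (H := H) tau_gt0 (x := H^-1)) minorant_gt1 invH_gt0.
exists K0 => // K K_gt0 K0_lt_K; exists tau => //.
apply: (lt_le_trans K0_gt1); apply: (le_trans (y := Kfun_minorant H K tau)).
  by apply: Kfun_minorant_homo; rewrite ?nnegrE //; exact: ltW.
by apply: Kfun_ge_minorant; exact: ltW.
Qed.

Section cauchy_schwarz.
Context {d} {T : measurableType d} {R : realType} (P : probability T R).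

Lemma Lnorm2_expectation (f : T -> R) (a : R) :
  ('E_P[f \* f] = a%:E)%E -> Lnorm P 2%:E (EFin \o f) = (Num.sqrt a)%:E.
Proof.
move=> Ef2; rewrite unlock /=.
have -> : (\int[P]_x (`|(f x)%:E| `^ 2))%E = a%:E.
  rewrite -Ef2 unlock; apply: eq_integral => x _.
  rewrite abse_EFin poweR_EFin (@powR_mulrn _ _ 2) ?normr_ge0//.
  by rewrite -normrX ger0_norm ?sqr_ge0// expr2.
have a_ge0 : 0 <= a.
  rewrite -lee_fin -Ef2 unlock; apply: integral_ge0 => x _.
  by rewrite lee_fin /= -expr2 sqr_ge0.
by rewrite poweR_EFin powR12_sqrt.
Qed.

Lemma cauchy_schwarz (f g : T -> R) (a b c : R) :
  measurable_fun setT f -> measurable_fun setT g ->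
  ('E_P[f \* f] = a%:E)%E -> ('E_P[g \* g] = b%:E)%E -> ('E_P[f \* g] = c%:E)%E ->
  `|c| <= Num.sqrt a * Num.sqrt b.
Proof.
move=> mf mg Ef2 Eg2 Efg.
have half_conj : 2^-1 + 2^-1 = 1 :> R by field.
have := hoelder P mf mg (ltr0Sn R 1) (ltr0Sn R 1) half_conj.
rewrite (Lnorm2_expectation Ef2) (Lnorm2_expectation Eg2) Lnorm1 -EFinM.
rewrite -lee_fin; apply: le_trans; rewrite -abse_EFin -Efg unlock.
apply: le_abse_integral => //; apply/measurable_EFinP.
exact: measurable_funM.
Qed.

Lemma gaussian_process_cov_le (S : set R) (X : R -> T -> R) (C : R -> R -> R)
    (s t : R) : centered_gaussian_process P S X C -> S s -> S t ->
  `|C s t| <= Num.sqrt (C s s) * Num.sqrt (C t t).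
Proof.
case=> X_meas _ X_cov _ Ss St.
exact: cauchy_schwarz (X_meas s Ss) (X_meas t St) (X_cov s s Ss Ss)
  (X_cov t t St St) (X_cov s t Ss St).
Qed.
End cauchy_schwarz.

Section covHK.
Variables (R : realType) (H K : R).

Lemma covHK_diag (t : R) : 0 < H -> 0 < K ->
  covHK H K t t = (`|t| `^ (H * K)) ^+ 2.
Proof.
move=> H_gt0 K_gt0; have two_gt0 : 0 < 2 :> R := ltr0Sn R 1.
rewrite /covHK subrr normr0 powR0 ?mulf_neq0 ?gt_eqF// subr0.
rewrite -(mulr2n (`|t| `^ (2 * H))) -(mulr_natl (`|t| `^ (2 * H)) 2).
rewrite (powRM _ (ltW two_gt0) (powR_ge0 _ _)) mulrA powRN.
rewrite (mulVf (lt0r_neq0 (powR_gt0 _ two_gt0))) mul1r.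
rewrite -powRrM -(powR_mulrn 2 (powR_ge0 _ _)) -powRrM.
by congr (_ `^ _); ring.
Qed.

Lemma covHK_1N1 : covHK H K 1 (-1) = 1 - 2 `^ ((2 * H - 1) * K).
Proof.
have two_gt0 : 0 < 2 :> R := ltr0Sn R 1.
have norm_N2 : `|-1 - 1| = 2 :> R by rewrite -opprD normrN ger0_norm.
rewrite /covHK normrN normr1 powR1 /= norm_N2 mulrBr powRN.
rewrite (mulVf (lt0r_neq0 (powR_gt0 _ two_gt0))) -powRN -(gt0_powRD two_gt0).
by congr (1 - 2 `^ _); ring.
Qed.

Lemma covHK_1_expR (tau : R) :
  covHK H K 1 (expR tau) = expR tau `^ (H * K) * Kfun H K tau.
Proof.
have two_gt0 : 0 < 2 :> R := ltr0Sn R 1.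
rewrite /covHK /Kfun normr1 powR1 /= (gtr0_norm (expR_gt0 _)).
have -> : 1 + expR tau `^ (2 * H) = 2 * cosh (H * tau) * expR (H * tau).
  by rewrite cosh_mul_expR -expRM; congr (1 + expR _); ring.
have -> : `|expR tau - 1| = 2 * `|sinh (tau / 2)| * expR (tau / 2).
  have -> : expR tau - 1 = 2 * sinh (tau / 2) * expR (tau / 2).
    by rewrite sinh_mul_expR; congr (expR _ - _); field.
  by rewrite !normrM normr_nat (gtr0_norm (expR_gt0 _)).
have cosh_ge0 := ltW (cosh_gt0 (H * tau)).
have sinh_ge0 := normr_ge0 (sinh (tau / 2)).
rewrite (powRM _ (mulr_ge0 (ltW two_gt0) cosh_ge0) (expR_ge0 _)).
rewrite (powRM _ (ltW two_gt0) cosh_ge0).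
rewrite (powRM _ (mulr_ge0 (ltW two_gt0) sinh_ge0) (expR_ge0 _)).
rewrite (powRM _ (ltW two_gt0) sinh_ge0) -!expRM.
have -> : (2 * H - 1) * K = - K + 2 * H * K by ring.
have -> : H * tau * K = tau * (H * K) by ring.
have -> : tau / 2 * (2 * H * K) = tau * (H * K) by field.
rewrite (gt0_powRD two_gt0) powRN; field.
exact: lt0r_neq0 (powR_gt0 _ two_gt0).
Qed.

Lemma sqrt_covHK_diag (t : R) : 0 < H -> 0 < K ->
  Num.sqrt (covHK H K t t) = `|t| `^ (H * K).
Proof.
by move=> H_gt0 K_gt0; rewrite covHK_diag// sqrtr_sqr ger0_norm// powR_ge0.
Qed.
End covHK.

Theorem proposition3p2 (R : realType) (H K : R) (hH : 0 < H) (hK : 0 < K) :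
  ((exists (d : measure_display) (T : measurableType d)
           (P : probability T R) (X : R -> T -> R),
       centered_gaussian_process P setT X (covHK H K)) ->
     (2 * H - 1) * K <= 1)
  /\
  ((exists (d : measure_display) (T : measurableType d)
           (P : probability T R) (X : R -> T -> R),
       centered_gaussian_process P [set t : R | 0 <= t] X (covHK H K)) ->
     (K%:E <= Khat H)%E)
  /\
  (1 < H -> (Khat H < (H^-1)%:E)%E).
Proof.
split; [|split].
- case=> d [T [P [X GP]]].
  have := gaussian_process_cov_le (s := 1) (t := -1) GP I I.
  rewrite covHK_1N1 !(sqrt_covHK_diag _ hH hK) normrN normr1 powR1 /= mulr1.
  rewrite ler_norml => /andP[lb _].
  rewrite -(gt1_ler_powRr _ _ (ltr1n R 2)) (powRr1 (ler0n R 2)); lra.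
- case=> d [T [P [X GP]]]; apply: Khat_ge => // tau tau_gt0.
  have S1 : [set t : R | 0 <= t] 1 by rewrite /= ler01.
  have Se : [set t : R | 0 <= t] (expR tau) by rewrite /= expR_ge0.
  have := gaussian_process_cov_le GP S1 Se.
  rewrite covHK_1_expR !(sqrt_covHK_diag _ hH hK) normr1 powR1 /= mul1r.
  rewrite (gtr0_norm (expR_gt0 tau)) normrM (ger0_norm (powR_ge0 _ _)).
  rewrite -[X in _ <= X]mulr1 ler_pM2l ?powR_gt0 ?expR_gt0//.
  exact: le_trans (ler_norm _).
- move=> H_gt1; have [K0 K0_lt Kfun_gt1] := Kfun_gt1_large_K H_gt1.
  by apply: le_lt_trans (Khat_le Kfun_gt1) _; rewrite lte_fin.
Qed.
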